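(* Let $C\subseteq 2^X$ be a maximum class of VC-dimension $d$ and let $D\subseteq C$ be a maximum class (on the same domain $X$) of VC-dimension $d-1$. Then each $c\in C\setminus D$ is the source of a unique incomplete cube for $(C,D)$. Moreover, if $r':D\to X(D)$ is a representation map for $D$ and $r:C\to X(C)$ extends $r'$ by setting $r(c)=\mathrm{supp}(s^{-1}(c))$ for each $c\in C\setminus D$ (where $s^{-1}(c)$ is the unique incomplete cube with source $c$), then $r$ is a representation map for $C$.
   Context: $X$ is a finite set, $n=|X|$; concepts $c\subseteq X$ are identified with characteristic functions, $c|Y$ is the restriction to $Y$ and $C|Y=\{c|Y:c\in C\}$. $Y$ is shattered by $C$ if $C|Y=2^Y$; VC-dimension is the maximum size of a shattered set; $C$ is maximum if $|C|=\sum_{i=0}^d\binom{n}{i}$ with $d$ its VC-dimension. $X(C)$ is the family of sets shattered by $C$. A cube of $2^X$ is $\{T\cup Z:Z\subseteq Y\}$ with $Y\subseteq X$, $T\subseteq X\setminus Y$, support $\mathrm{supp}=Y$; a cube of $C$ is a cube contained in $C$. A missed simplex for $(C,D)$ is a set $\sigma\in X(C)\setminus X(D)$ (it has size $d$). An incomplete cube for $(C,D)$ is a cube $Q$ of $C$ whose support is a missed simplex; its source $s(Q)$ is the unique $c\in Q$ with $c|\mathrm{supp}(Q)\notin D|\mathrm{supp}(Q)$. A representation map for a class $E$ with $|E|=|X(E)|$ is a bijection $r:E\to X(E)$ with $c|(r(c)\cup r(c'))\ne c'|(r(c)\cup r(c'))$ for all distinct $c,c'\in E$. *)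

From mathcomp Require Import all_boot.
Set Implicit Arguments. Unset Strict Implicit. Unset Printing Implicit Defensive.

Section VC.
Variable X : finType.

Definition restr (C : {set {set X}}) (Y : {set X}) : {set {set X}} :=
  [set c :&: Y | c in C].

Definition shatters (C : {set {set X}}) (Y : {set X}) : bool :=
  restr C Y == powerset Y.

Definition shattered_family (C : {set {set X}}) : {set {set X}} :=
  [set Y | shatters C Y].

Definition vcdim (C : {set {set X}}) (d : nat) : Prop :=
  (exists Y, shatters C Y /\ #|Y| = d) /\
  (forall Y, shatters C Y -> #|Y| <= d).

Definition maximum (C : {set {set X}}) (d : nat) : Prop :=
  vcdim C d /\ #|C| = \sum_(i < d.+1) 'C(#|X|, i).

Definition is_cube (Q : {set {set X}}) (Y : {set X}) : Prop :=
  exists T : {set X}, [disjoint T & Y] /\ Q = [set T :|: Z | Z in powerset Y].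

Definition incomplete_cube (C D Q : {set {set X}}) (Y : {set X}) : Prop :=
  [/\ is_cube Q Y, Q \subset C & Y \in shattered_family C :\: shattered_family D].

Definition is_source (D Q : {set {set X}}) (Y : {set X}) (c : {set X}) : Prop :=
  [/\ c \in Q, c :&: Y \notin restr D Y &
      forall c', c' \in Q -> c' :&: Y \notin restr D Y -> c' = c].

Definition repr_map (E : {set {set X}}) (r : {set X} -> {set X}) : Prop :=
  [/\ {in E, forall c, r c \in shattered_family E},
      {in E &, injective r},
      (forall Y, Y \in shattered_family E -> exists2 c, c \in E & r c = Y) &
      {in E &, forall c c', c != c' ->
         c :&: (r c :|: r c') != c' :&: (r c :|: r c')}].

End VC.

(* Everything is proved for maximum classes on an arbitrary finite domain S,
   so that the restriction C|W is again maximum. Sauer's bound together with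
   |C| = |C - x| + |C^x| shows that the deletion C - x and the reduction C^x of
   a maximum class are maximum on S - x, of dimensions d and d - 1; by
   induction through C^y, a maximum class of dimension d carries exactly one
   cube on every d-set Y, and a class of dimension d - 1 misses exactly one
   pattern on Y, so every missed simplex supports exactly one incomplete cube.
   Call c bad if it lies in C \ D and is the source of no incomplete cube, or
   is the source of two. Using the induction hypothesis for C - x and C^x, one
   shows that toggling any coordinate of a sourceless concept gives a doubly
   supported one and vice versa; since the cube 2^S is connected and D is
   nonempty, a bad concept would make some element of D bad, which is absurd.
   Finally, if c, c' in C \ D agreed on W = r(c) u r(c') with r(c) <> r(c'),
   then c|W would be the source of two incomplete cubes of the maximum class
   C|W. *)

From mathcomp Require Import all_boot zify.
From Stdlib Require Import Classical_Prop.
Set Implicit Arguments. Unset Strict Implicit. Unset Printing Implicit Defensive.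

Definition sum_binom j m := \sum_(i < j) 'C(m, i).

Lemma sum_binom0 m : sum_binom 0 m = 0.
Proof. by rewrite /sum_binom big_ord0. Qed.

Lemma sum_binomS j m : sum_binom j.+1 m = sum_binom j m + 'C(m, j).
Proof. by rewrite /sum_binom big_ord_recr. Qed.

Lemma sum_binom1 m : sum_binom 1 m = 1.
Proof. by rewrite sum_binomS sum_binom0 bin0. Qed.

Lemma sum_binom_gt0 j m : 0 < sum_binom j.+1 m.
Proof. by rewrite /sum_binom big_ord_recl bin0. Qed.

Lemma sum_binom_Pascal j m :
  sum_binom j.+1 m.+1 = sum_binom j.+1 m + sum_binom j m.
Proof.
elim: j => [|j IHj]; first by rewrite !sum_binomS !sum_binom0 !bin0.
by rewrite sum_binomS IHj binS !sum_binomS; lia.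
Qed.

Lemma sum_binom_full j m : m < j -> sum_binom j m = 2 ^ m.
Proof.
move=> lt_mj; rewrite -(subnKC lt_mj); elim: (j - m.+1) => [|k IHk].
  rewrite addn0 /sum_binom -[2]/(1 + 1) expnDn.
  by apply: eq_bigr => i _; rewrite !exp1n !muln1.
by rewrite addnS sum_binomS IHk bin_small ?addn0 // ltnS leq_addr.
Qed.

Lemma sum_binom_diag j : (sum_binom j j).+1 = 2 ^ j.
Proof. by rewrite -(sum_binom_full (ltnSn j)) sum_binomS binn addn1. Qed.

Section Shattering.
Variable X : finType.
Implicit Types (S Y W c u : {set X}) (C D : {set {set X}}).

Lemma setD1_notin c x : x \notin c -> c :\ x = c.
Proof. by move=> xNc; apply/setDidPl; rewrite disjoint_sym disjoints1. Qed.

Lemma setD1I_notin c x Y : x \notin Y -> (c :\ x) :&: Y = c :&: Y.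
Proof.
move=> xNY; rewrite setIDAC; apply/setDidPl.
by rewrite disjoint_sym disjoints1 inE (negbTE xNY) andbF.
Qed.

Lemma restr_sub C Y : restr C Y \subset powerset Y.
Proof. by apply/subsetP=> u /imsetP [c _ ->]; rewrite powersetE subsetIr. Qed.

Lemma shattersE C Y : shatters C Y = (powerset Y \subset restr C Y).
Proof. by rewrite /shatters eqEsubset restr_sub. Qed.

Lemma restr_id S C : C \subset powerset S -> restr C S = C.
Proof.
move=> /subsetP CS; apply/setP=> u; apply/imsetP/idP => [[c cC ->]|uC].
  by rewrite (setIidPl _) // -powersetE CS.
by exists u; rewrite // (setIidPl _) // -powersetE CS.
Qed.

Lemma restr_restr C W Y : Y \subset W -> restr (restr C W) Y = restr C Y.
Proof.
move=> YW; rewrite /restr -imset_comp; apply: eq_imset => c /=.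
by rewrite -setIA (setIidPr YW).
Qed.

Lemma shatters_set0 C : shatters C set0 = (C != set0).
Proof.
rewrite shattersE powerset0 sub1set; apply/imsetP/set0Pn => [[c cC _]|[c cC]].
  by exists c.
by exists c; rewrite ?setI0.
Qed.

Lemma shatters_notin C x Y :
  {in C, forall c, x \notin c} -> shatters C Y -> x \notin Y.
Proof.
move=> xNC; rewrite shattersE => /subsetP /(_ Y); rewrite powersetE subxx.
by case/(_ isT)/imsetP => c cC ->; rewrite inE (negbTE (xNC c cC)).
Qed.

Lemma shattersS C D Y : D \subset C -> shatters D Y -> shatters C Y.
Proof. by move=> sDC; rewrite !shattersE => /subset_trans; apply; apply: imsetS. Qed.

Definition deletion C x := [set c :\ x | c in C].
Definition reduction C x := [set c in C | (x \notin c) && (x |: c \in C)].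

Lemma card_deletion_reduction C x :
  #|C| = #|deletion C x| + #|reduction C x|.
Proof.
set P := [set c : {set X} | x \in c]; set C1 := C :&: P; set C0 := C :\: P.
have -> : #|C| = #|C0| + #|C1| by rewrite addnC cardsID.
have card_C1 : #|[set c :\ x | c in C1]| = #|C1|.
  apply: card_in_imset => c1 c2; rewrite !inE => /andP [_ x1] /andP [_ x2] e.
  by rewrite -(setD1K x1) e setD1K.
have -> : deletion C x = C0 :|: [set c :\ x | c in C1].
  apply/setP=> u; apply/imsetP/setUP => [[c cC ->]|].
    case xc: (x \in c); [right | left].
      by apply: imset_f; rewrite !inE cC xc.
    by rewrite setD1_notin ?xc // !inE cC xc.
  case; first by rewrite !inE => /andP [xu uC]; exists u; rewrite ?setD1_notin.
  by case/imsetP=> c; rewrite !inE => /andP [cC _] ->; exists c.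
have -> : reduction C x = C0 :&: [set c :\ x | c in C1].
  apply/setP=> u; rewrite !inE; apply/andP/andP => [[uC /andP [xu xuC]]|].
    split; first by rewrite xu uC.
    by apply/imsetP; exists (x |: u); rewrite ?setU1K // !inE xuC eqxx.
  case=> /andP [xu uC] /imsetP [c]; rewrite !inE => /andP [cC xc] ec.
  by rewrite ec setD1K // -ec uC xu cC.
by rewrite cardsUI card_C1.
Qed.

Lemma restr_deletion C x Y : x \notin Y -> restr (deletion C x) Y = restr C Y.
Proof.
move=> xNY; rewrite /restr /deletion -imset_comp.
by apply: eq_imset => c /=; rewrite setD1I_notin.
Qed.

Lemma shatters_deletion C x Y : shatters (deletion C x) Y -> shatters C Y.
Proof.
move=> sh; have xNY : x \notin Y.
  by apply: shatters_notin sh => _ /imsetP [c _ ->]; rewrite setD11.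
by move: sh; rewrite /shatters restr_deletion.
Qed.

Lemma shatters_reduction C x Y :
  shatters (reduction C x) Y -> x \notin Y /\ shatters C (x |: Y).
Proof.
move=> sh; have xNY : x \notin Y.
  by apply: shatters_notin sh => c; rewrite inE => /and3P [].
split=> //; rewrite shattersE; apply/subsetP => P; rewrite powersetE => PxY.
have : P :\ x \in restr (reduction C x) Y.
  move: sh; rewrite shattersE => /subsetP; apply.
  by rewrite powersetE subDset.
case/imsetP=> c; rewrite inE => /and3P [cC xc xcC] ePc.
apply/imsetP; case xP: (x \in P).
  by exists (x |: c); rewrite // -setUIr -ePc setD1K.
exists c; rewrite // -(setD1_notin (negbT xP)) ePc setIUr.
by rewrite (@disjoint_setI0 _ c [set x]) ?set0U // disjoint_sym disjoints1.
Qed.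

Lemma deletion_sub S C x :
  C \subset powerset S -> deletion C x \subset powerset (S :\ x).
Proof.
move=> /subsetP CS; apply/subsetP=> _ /imsetP [c cC ->].
by rewrite powersetE setSD // -powersetE CS.
Qed.

Lemma reduction_sub S C x :
  C \subset powerset S -> reduction C x \subset powerset (S :\ x).
Proof.
move=> /subsetP CS; apply/subsetP=> u; rewrite inE => /and3P [uC xu _].
by rewrite powersetE subsetD1 xu andbT -powersetE CS.
Qed.

Lemma sauer S j C : C \subset powerset S ->
  (forall Y, shatters C Y -> #|Y| < j) -> #|C| <= sum_binom j #|S|.
Proof.
move: {2}#|S| (erefl #|S|) => n; elim: n S j C => [|n IHn] S [|j] C cardS CS shC;
  try by rewrite sum_binom0 leqn0 cards_eq0; apply: contraT;
         rewrite -shatters_set0 => /shC; rewrite cards0.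
  by move: (subset_leq_card CS); rewrite card_powerset cardS sum_binom_full.
have [x xS] : exists x, x \in S by apply/card_gt0P; rewrite cardS.
have cardSx : #|S :\ x| = n by move: cardS; rewrite (cardsD1 x) xS => -[].
rewrite (card_deletion_reduction C x) cardS sum_binom_Pascal -cardSx; apply: leq_add.
  by apply: IHn => [||Y /shatters_deletion /shC] //; apply: deletion_sub.
apply: IHn => [||Y /shatters_reduction [xNY /shC]] //; first exact: reduction_sub.
by rewrite cardsU1 xNY.
Qed.

End Shattering.

Section MaximumClasses.
Variable X : finType.
Implicit Types (S Y Z W T c p q : {set X}) (C D : {set {set X}}).

(* [j] bounds the sizes of shattered sets strictly: [maximum C d] is
   [maximum_on [set: X] d.+1 C]. *)
Definition maximum_on S j C := [/\ C \subset powerset S,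
  forall Y, shatters C Y -> #|Y| < j & #|C| = sum_binom j #|S|].

Lemma maximum_on_deletion_reduction S k C x :
  maximum_on S k.+1 C -> x \in S ->
  maximum_on (S :\ x) k.+1 (deletion C x) /\ maximum_on (S :\ x) k (reduction C x).
Proof.
case=> CS shC cardC xS.
have shCx : forall Y, shatters (deletion C x) Y -> #|Y| < k.+1.
  by move=> Y /shatters_deletion; apply: shC.
have shCr : forall Y, shatters (reduction C x) Y -> #|Y| < k.
  by move=> Y /shatters_reduction [xNY /shC]; rewrite cardsU1 xNY.
have le_del := sauer (deletion_sub x CS) shCx.
have le_red := sauer (reduction_sub x CS) shCr.
move: cardC; rewrite (card_deletion_reduction C x) (cardsD1 x S) xS sum_binom_Pascal.
move=> cardC; split; split; rewrite ?deletion_sub ?reduction_sub //; apply/eqP.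
  by rewrite eqn_leq le_del -(leq_add2r #|reduction C x|) cardC leq_add2l.
by rewrite eqn_leq le_red -(leq_add2l #|deletion C x|) cardC leq_add2r.
Qed.

Lemma maximum_on_deletion S j C x :
  maximum_on S j C -> x \in S -> maximum_on (S :\ x) j (deletion C x).
Proof.
case: j => [|k]; last by move=> mC xS; case: (maximum_on_deletion_reduction mC xS).
case=> CS _; rewrite sum_binom0 => /cards0_eq -> xS.
rewrite /deletion imset0; split; rewrite ?sub0set ?cards0 ?sum_binom0 // => Y.
by rewrite /shatters /restr imset0 => /eqP/setP/(_ set0); rewrite !inE sub0set.
Qed.

Lemma maximum_on_reduction S k C x :
  maximum_on S k.+1 C -> x \in S -> maximum_on (S :\ x) k (reduction C x).
Proof. by move=> mC xS; case: (maximum_on_deletion_reduction mC xS). Qed.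

Lemma maximum_on_restr S W j C :
  W \subset S -> maximum_on S j C -> maximum_on W j (restr C W).
Proof.
move: {2}#|S :\: W| (erefl #|S :\: W|) => n.
elim: n S C => [|n IHn] S C cardSW WS mC.
  have <- : S = W by apply/eqP; rewrite eqEsubset WS andbT -setD_eq0 -cards_eq0 cardSW.
  by rewrite restr_id //; case: mC.
have [x] : exists x, x \in S :\: W by apply/card_gt0P; rewrite cardSW.
rewrite inE => /andP [xNW xS].
rewrite -(restr_deletion C xNW); apply: (IHn (S :\ x)).
- move: cardSW; rewrite (cardsD1 x) !inE xNW xS => -[<-].
  by rewrite setDDl setDDl setUC.
- by rewrite subsetD1 WS xNW.
- exact: maximum_on_deletion.
Qed.

Lemma maximum_on_shatters S j C Y :
  maximum_on S j.+1 C -> Y \subset S -> #|Y| <= j -> shatters C Y.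
Proof.
move=> mC YS leYj; have [_ _ cardCY] := maximum_on_restr YS mC.
by rewrite /shatters eqEcard restr_sub cardCY card_powerset sum_binom_full ?leqnn.
Qed.

Lemma maximum_on_missing S j C Y :
  maximum_on S j C -> Y \subset S -> #|Y| = j -> #|powerset Y :\: restr C Y| = 1.
Proof.
move=> mC YS cardY; have [_ _ cardCY] := maximum_on_restr YS mC.
rewrite cardsD (setIidPr (restr_sub C Y)) cardCY card_powerset cardY.
by rewrite -sum_binom_diag subSnn.
Qed.

Lemma maximum_on_missing_eq S j C Y p q :
  maximum_on S j C -> Y \subset S -> #|Y| = j -> p \subset Y -> q \subset Y ->
  p \notin restr C Y -> q \notin restr C Y -> p = q.
Proof.
move=> mC YS cardY pY qY pN qN.
by apply: (card_le1_eqP (eq_leq (maximum_on_missing mC YS cardY)));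
  rewrite inE powersetE ?pN ?qN.
Qed.

Definition cube_in C T Y := forall Z, Z \subset Y -> T :|: Z \in C.

Lemma cube_in_reduction C T Y y : y \in Y -> y \notin T ->
  cube_in C T Y -> cube_in (reduction C y) T (Y :\ y).
Proof.
move=> yY yNT cubeC Z ZYy; have ZY : Z \subset Y := subset_trans ZYy (subD1set Y y).
have yNZ : y \notin Z by apply/negP => /(subsetP ZYy); rewrite setD11.
rewrite inE cubeC // inE negb_or yNT yNZ setUCA cubeC //.
by rewrite subUset sub1set yY.
Qed.

Lemma cube_in_reduction_inv C T Y y : y \in Y ->
  cube_in (reduction C y) T (Y :\ y) -> cube_in C T Y.
Proof.
move=> yY cubeCy Z ZY; have /cubeCy : Z :\ y \subset Y :\ y by apply: setSD.
rewrite inE => /and3P [TZC _ yTZC]; case/boolP: (y \in Z) => [yZ | yNZ].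
  by rewrite -(setD1K yZ) setUCA.
by rewrite -(setD1_notin yNZ).
Qed.

Lemma maximum_on_cube_ex S j C Y : maximum_on S j.+1 C -> Y \subset S ->
  #|Y| = j -> exists2 T : {set X}, [disjoint T & Y] & cube_in C T Y.
Proof.
elim: j S C Y => [|j IHj] S C Y mC YS cardY.
  have -> : Y = set0 by apply/cards0_eq.
  case: mC => _ _; rewrite sum_binom1 => /eqP /cards1P [c ->].
  exists c; first by rewrite disjoints_subset setC0 subsetT.
  by move=> Z; rewrite subset0 => /eqP ->; rewrite setU0 set11.
have [y yY] : exists y, y \in Y by apply/card_gt0P; rewrite cardY.
have yS : y \in S := subsetP YS y yY.
have [|T disjT cubeCy] := IHj _ _ (Y :\ y) (maximum_on_reduction mC yS) (setSD _ YS).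
  by move: cardY; rewrite (cardsD1 y) yY => -[].
have yNT : y \notin T.
  by move: (cubeCy set0 (sub0set _)); rewrite setU0 inE => /and3P [].
exists T; last exact: cube_in_reduction_inv cubeCy.
rewrite -(setD1K yY) disjoints_subset setCU subsetI -!disjoints_subset disjT.
by rewrite disjoint_sym disjoints1 yNT.
Qed.

Lemma maximum_on_cube_uniq S j C Y T1 T2 : maximum_on S j.+1 C -> Y \subset S ->
  #|Y| = j -> [disjoint T1 & Y] -> [disjoint T2 & Y] ->
  cube_in C T1 Y -> cube_in C T2 Y -> T1 = T2.
Proof.
elim: j S C Y T1 T2 => [|j IHj] S C Y T1 T2 mC YS cardY dis1 dis2 cube1 cube2.
  case: mC => _ _; rewrite sum_binom1 => /eq_leq/card_le1_eqP C1.
  move: (cube1 _ (sub0set Y)) (cube2 _ (sub0set Y)); rewrite !setU0.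
  by move=> T1C T2C; apply: C1.
have [y yY] : exists y, y \in Y by apply/card_gt0P; rewrite cardY.
have yNT T : [disjoint T & Y] -> y \notin T by move/disjointFl ->.
apply: IHj (maximum_on_reduction mC (subsetP YS y yY)) (setSD _ YS) _ _ _
  (cube_in_reduction yY (yNT _ dis1) cube1) (cube_in_reduction yY (yNT _ dis2) cube2).
- by move: cardY; rewrite (cardsD1 y) yY => -[].
- by apply: disjointWr dis1; apply: subD1set.
- by apply: disjointWr dis2; apply: subD1set.
Qed.

End MaximumClasses.

Section Sources.
Variable X : finType.
Implicit Types (S Y Z W T c : {set X}) (C D : {set {set X}}).

Lemma disjoint_setUD T Y Z : [disjoint T & Y] -> Z \subset Y -> (T :|: Z) :\: Y = T.
Proof.
move=> disTY ZY; rewrite setDUl (setDidPl disTY).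
by move: ZY; rewrite -setD_eq0 => /eqP ->; rewrite setU0.
Qed.

Lemma disjoint_setUI T Y Z : [disjoint T & Y] -> Z \subset Y -> (T :|: Z) :&: Y = Z.
Proof. by move=> disTY ZY; rewrite setIUl (disjoint_setI0 disTY) set0U (setIidPl ZY). Qed.

Lemma disjoint_setD c Y : [disjoint c :\: Y & Y].
Proof. by rewrite disjoints_subset subsetDr. Qed.

Definition source_at S j C D c Y :=
  [/\ Y \subset S, #|Y| = j, cube_in C (c :\: Y) Y & c :&: Y \notin restr D Y].

Lemma source_at_in S j C D c Y : source_at S j C D c Y -> c \in C.
Proof. by case=> _ _ cube _; rewrite -(setID c Y) setUC; apply/cube/subsetIr. Qed.

Lemma source_at_notin S j C D c Y : source_at S j C D c Y -> c \notin D.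
Proof. by case=> _ _ _; apply: contra => cD; apply: imset_f. Qed.

Lemma source_at_inj S j C D c1 c2 Y : maximum_on S j.+1 C -> maximum_on S j D ->
  source_at S j C D c1 Y -> source_at S j C D c2 Y -> c1 = c2.
Proof.
move=> mC mD src1 src2; case: src1 src2 => YS cardY cube1 miss1 [_ _ cube2 miss2].
rewrite -(setID c1 Y) -(setID c2 Y); congr (_ :|: _); last first.
  exact: (maximum_on_cube_uniq mC YS cardY (disjoint_setD _ _) (disjoint_setD _ _)).
exact: (maximum_on_missing_eq mD YS cardY (subsetIr _ _) (subsetIr _ _)).
Qed.

Lemma source_at_ex S j C D Y : maximum_on S j.+1 C -> maximum_on S j D ->
  Y \subset S -> #|Y| = j -> exists c, source_at S j C D c Y.
Proof.
move=> mC mD YS cardY; have [T disTY cube] := maximum_on_cube_ex mC YS cardY.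
have : 0 < #|powerset Y :\: restr D Y| by rewrite (maximum_on_missing mD YS cardY).
case/card_gt0P => p; rewrite inE powersetE => /andP [pND pY].
by exists (T :|: p); split; rewrite ?disjoint_setUD ?disjoint_setUI.
Qed.

Lemma source_at_deletion S j C D c Y x : x \in S -> x \notin Y ->
  source_at S j C D c Y -> source_at (S :\ x) j (deletion C x) (deletion D x) (c :\ x) Y.
Proof.
move=> xS xNY [YS cardY cube miss]; split=> //.
- by rewrite subsetD1 YS xNY.
- move=> Z ZY; have xNZ : x \notin Z by apply: contra xNY; apply: (subsetP ZY).
  rewrite -[Z](setD1_notin xNZ) setDDl [[set x] :|: _]setUC -setDDl -setDUl.
  by apply: imset_f; apply: cube.
- by rewrite restr_deletion // setD1I_notin.
Qed.

Lemma source_at_reduction S k C D c Y x : x \in Y ->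
  source_at S k.+1 C D c Y ->
  source_at (S :\ x) k (reduction C x) (reduction D x) (c :\ x) (Y :\ x).
Proof.
move=> xY [YS cardY cube miss]; split.
- exact: setSD.
- by move: cardY; rewrite (cardsD1 x) xY => -[].
- have -> : (c :\ x) :\: (Y :\ x) = c :\: Y.
    by apply/setP=> y; rewrite !inE; case: eqP => [->|] //=; rewrite xY.
  by apply: cube_in_reduction; rewrite // inE xY.
- apply: contra miss => /imsetP [f]; rewrite inE => /and3P [fD xNf xfD] ef.
  apply/imsetP; case/boolP: (x \in c) => xc; [exists (x |: f) | exists f] => //;
    apply/setP=> z; move/setP/(_ z): ef; rewrite !inE; case: eqP => [->|_ /= ->] //=.
  by rewrite xc xY.
by rewrite (negbTE xc) (negbTE xNf).
Qed.

Lemma source_at_restr S j C D c Y W : Y \subset W ->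
  source_at S j C D c Y -> source_at W j (restr C W) (restr D W) (c :&: W) Y.
Proof.
move=> YW [YS cardY cube miss]; split=> //.
- move=> Z ZY; have ZW := subset_trans ZY YW.
  rewrite -setIDAC -[Z](setIidPl ZW) -setIUl.
  by apply: imset_f; apply: cube.
- by rewrite restr_restr // -setIA (setIidPr YW).
Qed.

End Sources.

Section Toggle.
Variable X : finType.
Implicit Types (S Y u v c : {set X}).

Definition toggle u x := [set y | (y \in u) (+) (y == x)].

Lemma toggleD1 u x : toggle u x :\ x = u :\ x.
Proof. by apply/setP=> y; rewrite !inE; case: eqP; rewrite ?addbF. Qed.

Lemma toggle_in u x : x \in u -> toggle u x = u :\ x.
Proof.
by move=> xu; apply/setP=> y; rewrite !inE; case: eqP => [->|]; rewrite ?addbF ?xu.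
Qed.

Lemma toggle_notin u x : x \notin u -> toggle u x = x |: u.
Proof.
move=> xNu; apply/setP=> y; rewrite !inE.
by case: eqP => [->|]; rewrite ?addbF ?(negbTE xNu).
Qed.

Lemma toggle_neq u x : toggle u x != u.
Proof. by apply/negP=> /eqP/setP/(_ x); rewrite inE eqxx addbT; case: (x \in u). Qed.

Lemma setD1_eq_toggle u c x : u :\ x = c :\ x -> u = c \/ u = toggle c x.
Proof.
move/setP=> equx; have [xuc | xNuc] := eqVneq (x \in u) (x \in c); [left | right];
  apply/setP=> y; move: (equx y); rewrite !inE;
  case: eqP => [-> _ | _ /= ->]; rewrite ?addbT ?addbF //.
by move: xNuc; case: (x \in u); case: (x \in c).
Qed.

Lemma toggle_setI c x Y : x \notin Y -> toggle c x :&: Y = c :&: Y.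
Proof.
move=> xNY; apply/setP=> y; rewrite !inE.
by case: eqP => [->|]; rewrite ?addbF // (negbTE xNY) !andbF.
Qed.

Lemma toggle_setD c x Y : x \in Y -> toggle c x :\: Y = c :\: Y.
Proof.
by move=> xY; apply/setP=> y; rewrite !inE; case: eqP => [->|]; rewrite ?addbF ?xY.
Qed.

Lemma toggle_sub S u x : u \subset S -> x \in S -> toggle u x \subset S.
Proof.
move=> /subsetP uS xS; apply/subsetP=> y; rewrite inE.
by case: eqP => [->|_]; rewrite ?addbF // => /uS.
Qed.

Lemma toggle_connected S (G : {set X} -> Prop) :
  (forall u x, x \in S -> G u -> G (toggle u x)) ->
  forall u v, u \subset S -> v \subset S -> G u -> G v.
Proof.
move=> Gtoggle u v uS vS; move Dn: #|[set y | (y \in u) (+) (y \in v)]| => n.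
elim: n u uS Dn => [|n IHn] u uS Dn Gu.
  suff -> : v = u by [].
  apply/setP=> y; move/cards0_eq/setP/(_ y): Dn; rewrite !inE.
  by case: (y \in u); case: (y \in v).
have [x] : exists x, x \in [set y | (y \in u) (+) (y \in v)].
  by apply/card_gt0P; rewrite Dn.
rewrite inE => xuv; have xS : x \in S.
  by case/boolP: (x \in u) xuv => [/(subsetP uS) // | _ /= /(subsetP vS)].
apply: IHn (toggle u x) (toggle_sub uS xS) _ (Gtoggle u x xS Gu).
move: Dn; rewrite (cardsD1 x) inE xuv => -[<-]; apply: eq_card => y.
rewrite !inE; case: eqP => [->|] /=; last by rewrite addbF.
by move: xuv; case: (x \in u); case: (x \in v).
Qed.

End Toggle.

Section UniqueSupport.
Variable X : finType.
Implicit Types (S Y c u a : {set X}) (C D : {set {set X}}).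

Lemma reductionS C D x : D \subset C -> reduction D x \subset reduction C x.
Proof.
move=> /subsetP sDC; apply/subsetP=> u; rewrite !inE => /and3P [uD xNu xuD].
by rewrite xNu !sDC.
Qed.

Lemma setD1_in_reduction C c x :
  c \in C -> toggle c x \in C -> c :\ x \in reduction C x.
Proof.
move=> cC tC; rewrite inE setD11 /=; case/boolP: (x \in c) => xc.
  by rewrite setD1K // -(toggle_in xc) tC cC.
by rewrite setD1_notin // cC -(toggle_notin xc) tC.
Qed.

Lemma setD1_notin_reduction D c x : c \notin D -> c :\ x \notin reduction D x.
Proof.
move=> cND; rewrite inE; apply: contra cND => /and3P [cxD _ xcxD].
case/boolP: (x \in c) => xc; first by rewrite -(setD1K xc).
by rewrite -(setD1_notin xc).
Qed.

Definition unique_support S j C D :=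
  forall c, c \in C :\: D -> exists! Y, source_at S j C D c Y.

Lemma unique_support_eq S j C D c Y1 Y2 : unique_support S j C D ->
  source_at S j C D c Y1 -> source_at S j C D c Y2 -> Y1 = Y2.
Proof.
move=> uniqCD src1 src2.
have cCD : c \in C :\: D by rewrite inE (source_at_notin src1) (source_at_in src1).
by have [Y [_ eqY]] := uniqCD c cCD; rewrite -(eqY _ src1) -(eqY _ src2).
Qed.

Section InductiveStep.
Variables (S : {set X}) (k : nat) (C D : {set {set X}}).
Hypotheses (mC : maximum_on S k.+2 C) (mD : maximum_on S k.+1 D) (sDC : D \subset C).
Hypothesis IHdel : forall x, x \in S ->
  unique_support (S :\ x) k.+1 (deletion C x) (deletion D x).
Hypothesis IHred : forall x, x \in S ->
  unique_support (S :\ x) k (reduction C x) (reduction D x).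

Local Notation src := (source_at S k.+1 C D).

Lemma src_of_deletion x a : x \in S -> a \in deletion C x :\: deletion D x ->
  exists c Y, [/\ x \notin Y, src c Y & c :\ x = a].
Proof.
move=> xS aCD; have [Y [srcY _]] := IHdel xS aCD; have [YSx cardY _ _] := srcY.
have xNY : x \notin Y by apply/negP => /(subsetP YSx); rewrite setD11.
have [c srcc] := source_at_ex mC mD (subset_trans YSx (subD1set S x)) cardY.
exists c, Y; split=> //; apply: (source_at_inj (maximum_on_deletion mC xS))
  (maximum_on_deletion mD xS) (source_at_deletion xS xNY srcc) srcY.
Qed.

Lemma src_of_reduction x a : x \in S -> a \in reduction C x :\: reduction D x ->
  exists c Y, [/\ x \in Y, src c Y & c :\ x = a].
Proof.
move=> xS aCD; have [Y [srcY _]] := IHred xS aCD; have [YSx cardY _ _] := srcY.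
have xNY : x \notin Y by apply/negP => /(subsetP YSx); rewrite setD11.
have xYS : x |: Y \subset S.
  by rewrite subUset sub1set xS (subset_trans YSx (subD1set S x)).
have cardxY : #|x |: Y| = k.+1 by rewrite cardsU1 xNY cardY.
have [c srcc] := source_at_ex mC mD xYS cardxY.
exists c, (x |: Y); split; rewrite ?setU11 //.
have := source_at_reduction (setU11 x Y) srcc; rewrite setU1K // => srcc'.
exact: (source_at_inj (maximum_on_reduction mC xS))
  (maximum_on_reduction mD xS) srcc' srcY.
Qed.

Lemma support_eq_toggle x c1 c2 Y1 Y2 : x \in S -> src c1 Y1 -> src c2 Y2 ->
  c1 :\ x = c2 :\ x -> (x \in Y1) = (x \in Y2) -> Y1 = Y2.
Proof.
move=> xS src1 src2 e12; case/boolP: (x \in Y1) => xY1 /esym xY2.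
  have := source_at_reduction xY1 src1; rewrite e12 => src1'.
  have src2' := source_at_reduction xY2 src2.
  by rewrite -(setD1K xY1) -(setD1K xY2) (unique_support_eq (IHred xS) src1' src2').
have xNY2 : x \notin Y2 by rewrite xY2.
have := source_at_deletion xS xY1 src1; rewrite e12 => src1'.
exact: unique_support_eq (IHdel xS) src1' (source_at_deletion xS xNY2 src2).
Qed.

Definition sourceless u := u \in C :\: D /\ ~ exists Y, src u Y.

Definition multisupported u := exists Y1 Y2, [/\ Y1 != Y2, src u Y1 & src u Y2].

Lemma sourceless_toggle c x : sourceless c -> x \in S -> multisupported (toggle c x).
Proof.
case=> /setDP [cC cND] nosrc xS.
have lift_toggle c' Y : src c' Y -> c' :\ x = c :\ x -> c' = toggle c x.
  move=> srcc' /setD1_eq_toggle [eqc' | //].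
  by case: nosrc; exists Y; rewrite -eqc'.
have src_red : toggle c x \in C -> exists2 Y : {set X}, x \in Y & src (toggle c x) Y.
  move=> tC; have cxCD : c :\ x \in reduction C x :\: reduction D x.
    by rewrite inE setD1_notin_reduction // setD1_in_reduction.
  have [c2 [Y2 [xY2 src2 e2]]] := src_of_reduction xS cxCD.
  by exists Y2; rewrite // -(lift_toggle c2 Y2).
case/boolP: (c :\ x \in deletion D x) => [/imsetP [e eD ee] | cxND].
  have [eqec | eqet] := setD1_eq_toggle (esym ee); first by rewrite -eqec eD in cND.
  rewrite eqet in eD; have [Y2 _ src2] := src_red (subsetP sDC _ eD).
  by rewrite (negbTE (source_at_notin src2)) in eD.
have cxCD : c :\ x \in deletion C x :\: deletion D x.
  by rewrite inE cxND; apply: imset_f.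
have [c1 [Y1 [xNY1 src1 e1]]] := src_of_deletion xS cxCD.
have eqc1 := lift_toggle _ _ src1 e1; rewrite {}eqc1 in src1.
have [Y2 xY2 src2] := src_red (source_at_in src1).
exists Y1, Y2; split=> //; apply: contraNneq xNY1 => ->.
exact: xY2.
Qed.

Lemma multisupported_toggle c x : multisupported c -> x \in S -> sourceless (toggle c x).
Proof.
move=> [Y1 [Y2 [neqY src1 src2]]] xS.
wlog [xY1 xNY2] : Y1 Y2 neqY src1 src2 / x \in Y1 /\ x \notin Y2.
  move=> gen; have sep : (x \in Y1) != (x \in Y2).
    by apply: contra neqY => /eqP /(support_eq_toggle xS src1 src2 erefl) ->.
  have [xY1 | xNY1] := boolP (x \in Y1).
    by apply: (gen Y1 Y2) => //; split=> //; move: sep; rewrite xY1; case: (x \in Y2).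
  apply: (gen Y2 Y1) => //; first by rewrite eq_sym.
  by split=> //; move: sep; rewrite (negbTE xNY1); case: (x \in Y2).
have tC : toggle c x \in C.
  case: src1 => _ _ cube _; rewrite -(setID (toggle c x) Y1) setUC toggle_setD //.
  exact/cube/subsetIr.
have tND : toggle c x \notin D.
  case: src2 => _ _ _; apply: contra => tD.
  by rewrite -(toggle_setI c xNY2); apply: imset_f.
split; first by rewrite inE tC tND.
case=> Y3 src3; have /negP := toggle_neq c x; apply; apply/eqP.
have [xY3 | xNY3] := boolP (x \in Y3).
  have eqY : Y3 = Y1 by apply: support_eq_toggle xS src3 src1 _ _; rewrite ?toggleD1 ?xY3.
  by rewrite eqY in src3; apply: source_at_inj mC mD src3 src1.
have eqY : Y3 = Y2.
  apply: support_eq_toggle xS src3 src2 _ _; first exact: toggleD1.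
  by rewrite (negbTE xNY3) (negbTE xNY2).
by rewrite eqY in src3; apply: source_at_inj mC mD src3 src2.
Qed.

Lemma sourceless_multisupported_false u : sourceless u \/ multisupported u -> False.
Proof.
pose G v := sourceless v \/ multisupported v.
have GCD v : G v -> v \in C :\: D.
  case=> [[]//|[Y1 [_ [_ src1 _]]]].
  by rewrite inE (source_at_notin src1) (source_at_in src1).
have sub_S v : v \in C -> v \subset S.
  by case: mC => /subsetP CS _ _ /CS; rewrite powersetE.
have [d dD] : exists d, d \in D.
  by apply/card_gt0P; case: mD => _ _ ->; apply: sum_binom_gt0.
move=> Gu; have uC : u \in C by move: (GCD u Gu); rewrite inE => /andP [].
suff /GCD : G d by rewrite inE dD.
apply: (toggle_connected (G := G) _ (sub_S u uC) (sub_S d (subsetP sDC d dD)) Gu).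
move=> v x xS [Gv | Gv]; [right | left].
  exact: sourceless_toggle Gv xS.
exact: multisupported_toggle Gv xS.
Qed.

Lemma unique_support_step : unique_support S k.+1 C D.
Proof.
move=> c cCD; have [Y srcY] : exists Y, src c Y.
  by apply: NNPP => nosrc; apply: (@sourceless_multisupported_false c); left.
exists Y; split=> // Y' srcY'; case: (eqVneq Y Y') => // neqY; exfalso.
by apply: (@sourceless_multisupported_false c); right; exists Y, Y'.
Qed.

End InductiveStep.

Lemma unique_support_base S C : unique_support S 0 C set0.
Proof.
move=> c; rewrite setD0 => cC; exists set0; split.
  split; rewrite ?sub0set ?cards0 //; last by rewrite /restr imset0 inE.
  by move=> Z; rewrite subset0 => /eqP ->; rewrite setD0 setU0.
by move=> Y [_ /cards0_eq ->].
Qed.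

Theorem maximum_on_unique_support S j C D :
  maximum_on S j.+1 C -> maximum_on S j D -> D \subset C -> unique_support S j C D.
Proof.
move: {2}#|S| (erefl #|S|) => n.
elim/ltn_ind: n S j C D => n IHn S [|k] C D cardS mC mD sDC.
  by case: mD => _ _; rewrite sum_binom0 => /cards0_eq ->; apply: unique_support_base.
apply: (unique_support_step mC mD sDC) => x xS;
  have ltSx : #|S :\ x| < n by rewrite -cardS (cardsD1 x S) xS.
  by apply: IHn ltSx _ _ _ _ erefl (maximum_on_deletion mC xS)
    (maximum_on_deletion mD xS) (imsetS _ sDC).
by apply: IHn ltSx _ _ _ _ erefl (maximum_on_reduction mC xS)
  (maximum_on_reduction mD xS) (reductionS x sDC).
Qed.

End UniqueSupport.

Section IncompleteCubes.
Variable X : finType.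
Implicit Types (S Y W c : {set X}) (C D Q : {set {set X}}).

Lemma maximum_on_setT C d : maximum C d -> maximum_on [set: X] d.+1 C.
Proof.
case=> [[_ vcC] cardC]; split.
- by apply/subsetP=> c _; rewrite powersetE subsetT.
- by move=> Y /vcC; rewrite ltnS.
- by rewrite cardsT cardC.
Qed.

Lemma missed_simplexE j C D Y :
  maximum_on [set: X] j.+2 C -> maximum_on [set: X] j.+1 D ->
  (Y \in shattered_family C :\: shattered_family D) = (#|Y| == j.+1).
Proof.
move=> mC mD; rewrite !inE; apply/andP/eqP => [[YND YC] | cardY].
  have [_ shC _] := mC; apply/eqP; rewrite eqn_leq -ltnS shC //= ltnNge.
  by apply: contra YND; apply: maximum_on_shatters mD (subsetT Y).
split; last by apply: maximum_on_shatters mC (subsetT Y) _; rewrite cardY.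
by have [_ shD _] := mD; apply/negP => /shD; rewrite cardY ltnn.
Qed.

Definition cube_of c Y := [set (c :\: Y) :|: Z | Z in powerset Y].

Lemma source_at_incomplete_cube j C D c Y :
  maximum_on [set: X] j.+2 C -> maximum_on [set: X] j.+1 D ->
  source_at [set: X] j.+1 C D c Y ->
  incomplete_cube C D (cube_of c Y) Y /\ is_source D (cube_of c Y) Y c.
Proof.
move=> mC mD [_ cardY cube miss]; split; split.
- by exists (c :\: Y); split; first exact: disjoint_setD.
- by apply/subsetP=> q /imsetP [Z]; rewrite powersetE => ZY ->; apply: cube.
- by rewrite (missed_simplexE _ mC mD) cardY.
- by apply/imsetP; exists (c :&: Y); rewrite ?powersetE ?subsetIr // setUC setID.
- exact: miss.
- move=> q /imsetP [Z]; rewrite powersetE => ZY ->.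
  rewrite disjoint_setUI ?disjoint_setD // => ZND.
  rewrite (maximum_on_missing_eq mD (subsetT Y) cardY ZY (subsetIr c Y)) //.
  by rewrite setUC setID.
Qed.

Lemma incomplete_cube_source_at j C D Q Y c :
  maximum_on [set: X] j.+2 C -> maximum_on [set: X] j.+1 D ->
  incomplete_cube C D Q Y -> is_source D Q Y c ->
  source_at [set: X] j.+1 C D c Y /\ Q = cube_of c Y.
Proof.
move=> mC mD [[T [disTY ->]] QC missY] [cQ miss _].
have [Z0 Z0Y eqc] : exists2 Z0 : {set X}, Z0 \subset Y & c = T :|: Z0.
  by case/imsetP: cQ => Z0; rewrite powersetE => Z0Y ->; exists Z0.
have eqT : c :\: Y = T by rewrite eqc disjoint_setUD.
split; last by rewrite /cube_of eqT.
split; rewrite ?subsetT ?eqT //.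
- by apply/eqP; rewrite -(missed_simplexE _ mC mD).
- by move=> Z ZY; apply: (subsetP QC); apply: imset_f; rewrite powersetE.
Qed.

Lemma source_at_setI_neq S j C D c c' Y W :
  c \in D -> source_at S j C D c' Y -> Y \subset W -> c :&: W != c' :&: W.
Proof.
move=> cD [_ _ _ miss] YW; apply: contraNneq miss => eqW.
by rewrite -(setIidPr YW) setIA -eqW -setIA (setIidPr YW); apply: imset_f.
Qed.

Section Representation.
Variables (d : nat) (C D : {set {set X}}) (r' r : {set X} -> {set X}).
Hypotheses (mC : maximum_on [set: X] d.+2 C) (mD : maximum_on [set: X] d.+1 D).
Hypotheses (sDC : D \subset C) (rD : repr_map D r') (eq_r : {in D, r =1 r'}).
Hypothesis src_r : forall c, c \in C :\: D -> source_at [set: X] d.+1 C D c (r c).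

Lemma repr_missed c : c \in C :\: D -> r c \in shattered_family C :\: shattered_family D.
Proof. by move=> /src_r [_ cardY _ _]; rewrite (missed_simplexE _ mC mD) cardY. Qed.

Lemma repr_shattered : {in C, forall c, r c \in shattered_family C}.
Proof.
move=> c cC; have [cD | cND] := boolP (c \in D).
  have [rDsh _ _ _] := rD; move: (rDsh c cD); rewrite -eq_r // !inE.
  exact: shattersS.
have /repr_missed : c \in C :\: D by rewrite inE cND.
by rewrite inE => /andP [].
Qed.

Lemma repr_D_neq_missed c1 c2 : c1 \in D -> c2 \in C :\: D -> r c1 != r c2.
Proof.
move=> c1D /repr_missed; rewrite inE => /andP [rc2ND _].
by have [rDsh _ _ _] := rD; apply: contraNneq rc2ND => <-; rewrite eq_r // rDsh.
Qed.

Lemma repr_inj : {in C &, injective r}.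
Proof.
move=> c1 c2 c1C c2C eqr; have [_ rDinj _ _] := rD.
have CD c : c \in C -> c \notin D -> c \in C :\: D by rewrite inE => -> ->.
have [c1D | c1ND] := boolP (c1 \in D); have [c2D | c2ND] := boolP (c2 \in D).
- by apply: rDinj; rewrite // -!eq_r.
- by move: (repr_D_neq_missed c1D (CD _ c2C c2ND)); rewrite eqr eqxx.
- by move: (repr_D_neq_missed c2D (CD _ c1C c1ND)); rewrite eqr eqxx.
- have src1 := src_r (CD _ c1C c1ND); rewrite eqr in src1.
  exact: source_at_inj mC mD src1 (src_r (CD _ c2C c2ND)).
Qed.

Lemma repr_surj Y : Y \in shattered_family C -> exists2 c, c \in C & r c = Y.
Proof.
move=> YC; have [YD | YND] := boolP (Y \in shattered_family D).
  have [_ _ rDsurj _] := rD; have [c cD <-] := rDsurj Y YD.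
  by exists c; rewrite ?eq_r // (subsetP sDC).
have /eqP cardY : #|Y| == d.+1 by rewrite -(missed_simplexE _ mC mD) inE YND.
have [c srcc] := source_at_ex mC mD (subsetT Y) cardY.
have cCD : c \in C :\: D by rewrite inE (source_at_notin srcc) (source_at_in srcc).
exists c; first exact: source_at_in srcc.
exact: unique_support_eq (maximum_on_unique_support mC mD sDC) (src_r cCD) srcc.
Qed.

Lemma repr_separates : {in C &, forall c1 c2, c1 != c2 ->
  c1 :&: (r c1 :|: r c2) != c2 :&: (r c1 :|: r c2)}.
Proof.
move=> c1 c2 c1C c2C neqc; set W := r c1 :|: r c2.
have CD c : c \in C -> c \notin D -> c \in C :\: D by rewrite inE => -> ->.
have [c1D | c1ND] := boolP (c1 \in D); have [c2D | c2ND] := boolP (c2 \in D).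
- by have [_ _ _ rDsep] := rD; rewrite /W !eq_r // rDsep.
- exact: source_at_setI_neq c1D (src_r (CD _ c2C c2ND)) (subsetUr _ _).
- by rewrite eq_sym; apply: source_at_setI_neq c2D (src_r (CD _ c1C c1ND)) (subsetUl _ _).
have src1 := src_r (CD _ c1C c1ND); have src2 := src_r (CD _ c2C c2ND).
have [eqr | neqr] := eqVneq (r c1) (r c2).
  by rewrite eqr in src1; rewrite (source_at_inj mC mD src1 src2) eqxx in neqc.
apply: contra neqr => /eqP eqW.
have uniqW := maximum_on_unique_support (maximum_on_restr (subsetT W) mC)
  (maximum_on_restr (subsetT W) mD) (imsetS _ sDC).
have srcW1 := source_at_restr (subsetUl _ _ : r c1 \subset W) src1.
have := source_at_restr (subsetUr _ _ : r c2 \subset W) src2; rewrite -eqW => srcW2.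
by rewrite (unique_support_eq uniqW srcW1 srcW2).
Qed.

Lemma repr_map_extension : repr_map C r.
Proof.
by split; [apply: repr_shattered | apply: repr_inj | apply: repr_surj | apply: repr_separates].
Qed.

End Representation.

End IncompleteCubes.

Theorem proposition5p2 (X : finType) (d : nat) (C D : {set {set X}}) :
  maximum C d.+1 -> maximum D d -> D \subset C ->
  (forall c, c \in C :\: D ->
     exists! Q : {set {set X}}, exists Y : {set X},
       incomplete_cube C D Q Y /\ is_source D Q Y c) /\
  (forall r' r : {set X} -> {set X},
     repr_map D r' ->
     {in D, forall c, r c = r' c} ->
     (forall c, c \in C :\: D ->
        exists Q : {set {set X}}, incomplete_cube C D Q (r c) /\ is_source D Q (r c) c) ->
     repr_map C r).
Proof.
move=> /maximum_on_setT mC /maximum_on_setT mD sDC.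
split=> [c cCD | r' r rD eq_r src_r].
  have [Y [srcY uniqY]] := maximum_on_unique_support mC mD sDC cCD.
  exists (cube_of c Y); split; first by exists Y; apply: source_at_incomplete_cube mC mD srcY.
  move=> Q [Y' [cubeQ srcQ]]; have [srcY' ->] := incomplete_cube_source_at mC mD cubeQ srcQ.
  by rewrite (uniqY _ srcY').
apply: (repr_map_extension mC mD sDC rD eq_r) => c cCD.
by have [Q [cubeQ srcQ]] := src_r c cCD; case: (incomplete_cube_source_at mC mD cubeQ srcQ).
Qed.
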